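(* Let $A:\mathbb{N}\to\mathbb{Z}$ and $B:\mathbb{N}\to\mathbb{Z}_{>0}$ be primitive recursive functions, and let $q_n = A(n)/B(n)$. Suppose there is a primitive recursive function $C:\mathbb{N}\to\mathbb{N}$ (a Cauchy modulus of convergence) such that for every $e\in\mathbb{N}$ and all $i,j\ge C(e)$ we have $|q_i-q_j|<2^{-e}$. Then there exist an integer $I$ and a primitive recursive function $P:\mathbb{Z}^+\to\{-1,0,1\}$ such that $$I+\sum_{i=1}^{\infty}P(i)\,2^{-i}=\lim_{n\to\infty} q_n,$$ i.e. the limit of $(q_n)$ is the value of a Signed Primitive Recursive Computed Number.
   Context: A Signed Primitive Recursive Computed Number (SPRCN) is a pair $(I,P)$ where $I\in\mathbb{Z}$ and $P:\mathbb{Z}^+\to\{-1,0,1\}$ is a primitive recursive function; it represents the rational sequence $\left(I+\sum_{i=1}^n P(i)2^{-i}\right)_n$, whose limit $I+\sum_{i=1}^\infty P(i)2^{-i}$ is called the value (or limit) of the SPRCN. *)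

From Stdlib Require Import Reals ZArith Arith.

(* Syntax of primitive recursive functions, indexed by arity.
   An argument vector of arity n is represented by a function nat -> nat of
   which only the entries 0..n-1 are ever read. *)
Inductive PrimRec : nat -> Type :=
| PR_zero (n : nat) : PrimRec n
| PR_succ : PrimRec 1
| PR_proj (n i : nat) (H : i < n) : PrimRec n
| PR_comp (n m : nat) (g : PrimRec m) (fs : nat -> PrimRec n) : PrimRec n
| PR_rec (n : nat) (g : PrimRec n) (h : PrimRec (S (S n))) : PrimRec (S n).
    (* primitive recursion:  f(0,x) = g(x), f(y+1,x) = h(y, f(y,x), x) *)

Definition vcons (x : nat) (v : nat -> nat) : nat -> nat :=
  fun i => match i with 0 => x | S j => v j end.

Fixpoint pr_eval {n : nat} (f : PrimRec n) : (nat -> nat) -> nat :=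
  match f with
  | PR_zero _ => fun _ => 0
  | PR_succ => fun v => S (v 0)
  | PR_proj _ i _ => fun v => v i
  | PR_comp _ m g fs => fun v => pr_eval g (fun k => pr_eval (fs k) v)
  | PR_rec _ g h => fun v =>
      nat_rect (fun _ => nat) (pr_eval g (fun i => v (S i)))
        (fun y r => pr_eval h (vcons y (vcons r (fun i => v (S i))))) (v 0)
  end.

Definition prim_rec_nat (F : nat -> nat) : Prop :=
  exists f : PrimRec 1, forall n, F n = pr_eval f (fun _ => n).

Definition prim_rec_Z (F : nat -> Z) : Prop :=
  prim_rec_nat (fun n => Z.abs_nat (F n)) /\
  prim_rec_nat (fun n => if Z.ltb (F n) 0 then 1 else 0).

(* Let x be the limit of q_n = A n / B n; by the modulus C, q_m is within
   2^-e of x as soon as m >= C e.  Shifting by a natural number K with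
   x + K >= 1 lets us work with natural numbers only: we build T_n with
   |(x + K) 2^n - T_n| <= 1 by T_(n+1) = 2 T_n + d_n - 1, where the digit
   d_n in {0, 1, 2} compares T_n, up to 1/4, with the rational
   (q_m + K) 2^n, m = C (n + 3), which is 1/8-close to (x + K) 2^n.  Then
   P (k+1) = d_k - 1 and I = T_0 - K satisfy
   I + sum_(k <= n) P (k+1) / 2^(k+1) = T_(n+1) / 2^(n+1) - K --> x. *)

From Stdlib Require Import Reals ZArith Arith Lia Lra.

Definition prim_rec_vec (n : nat) (g : (nat -> nat) -> nat) : Prop :=
  exists t : PrimRec n, forall v, g v = pr_eval t v.

Definition prim_rec_binop (h : nat -> nat -> nat) : Prop :=
  prim_rec_vec 2 (fun w => h (w 0) (w 1)).

Lemma prim_rec_vec_ext (n : nat) (g g' : (nat -> nat) -> nat) :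
  (forall v, g v = g' v) -> prim_rec_vec n g -> prim_rec_vec n g'.
Proof. intros E [t Ht]; exists t; intro v; rewrite <- E; apply Ht. Qed.

Lemma prim_rec_vec_proj (n i : nat) : i < n -> prim_rec_vec n (fun v => v i).
Proof. intro H; exists (PR_proj n i H); reflexivity. Qed.

Lemma prim_rec_vec_succ (n : nat) (g : (nat -> nat) -> nat) : prim_rec_vec n g -> prim_rec_vec n (fun v => S (g v)).
Proof.
  intros [t Ht]; exists (PR_comp n 1 PR_succ (fun _ => t)); intro v; simpl.
  now rewrite Ht.
Qed.

Lemma prim_rec_vec_const (n c : nat) : prim_rec_vec n (fun _ => c).
Proof.
  induction c as [|c IHc].
  - exists (PR_zero n); reflexivity.
  - exact (prim_rec_vec_succ n _ IHc).
Qed.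

Lemma prim_rec_vec_comp1 (n : nat) (F : nat -> nat) (g : (nat -> nat) -> nat) :
  prim_rec_nat F -> prim_rec_vec n g -> prim_rec_vec n (fun v => F (g v)).
Proof.
  intros [f Hf] [t Ht]; exists (PR_comp n 1 f (fun _ => t)); intro v; simpl.
  rewrite Ht; apply Hf.
Qed.

Lemma prim_rec_vec_comp2 (n : nat) (h : nat -> nat -> nat) (g1 g2 : (nat -> nat) -> nat) :
  prim_rec_binop h -> prim_rec_vec n g1 -> prim_rec_vec n g2 ->
  prim_rec_vec n (fun v => h (g1 v) (g2 v)).
Proof.
  intros [f Hf] [t1 H1] [t2 H2].
  exists (PR_comp n 2 f (fun k => match k with 0 => t1 | _ => t2 end)); intro v; simpl.
  rewrite <- Hf; simpl; now rewrite H1, H2.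
Qed.

Lemma prim_rec_binop_rec (G : nat -> nat) (H : nat -> nat -> nat -> nat) :
  prim_rec_vec 1 (fun w => G (w 0)) -> prim_rec_vec 3 (fun w => H (w 0) (w 1) (w 2)) ->
  prim_rec_binop (fun y p => nat_rect (fun _ => nat) (G p) (fun y r => H y r p) y).
Proof.
  intros [g Hg] [h Hh]; exists (PR_rec 1 g h); intro v; simpl.
  induction (v 0) as [|y IHy]; simpl.
  - apply (Hg (fun i => v (S i))).
  - rewrite IHy; apply (Hh (vcons y (vcons _ (fun i => v (S i))))).
Qed.

Lemma prim_rec_nat_of_vec (F : nat -> nat) : prim_rec_vec 1 (fun w => F (w 0)) -> prim_rec_nat F.
Proof. intros [t Ht]; exists t; intro n; apply (Ht (fun _ => n)). Qed.

Lemma prim_rec_nat_iter (c : nat) (h : nat -> nat -> nat) :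
  prim_rec_binop h -> prim_rec_nat (fun n => nat_rect (fun _ => nat) c h n).
Proof.
  intro Hh; apply prim_rec_nat_of_vec.
  assert (Hrec : prim_rec_binop
            (fun y p => nat_rect (fun _ => nat) ((fun _ => c) p) (fun y r => h y r) y)).
  { apply (prim_rec_binop_rec (fun _ => c) (fun y r _ => h y r)).
    - apply prim_rec_vec_const.
    - apply (prim_rec_vec_comp2 3 h); [exact Hh | apply prim_rec_vec_proj; lia..]. }
  apply (prim_rec_vec_comp2 1 _ (fun w => w 0) (fun w => w 0) Hrec);
    apply prim_rec_vec_proj; lia.
Qed.

Lemma prim_rec_add : prim_rec_binop Nat.add.
Proof.
  eapply prim_rec_vec_ext;
    [| apply (prim_rec_binop_rec (fun p => p) (fun _ r _ => S r))].
  - intro v; simpl; induction (v 0); simpl; congruence.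
  - apply prim_rec_vec_proj; lia.
  - apply prim_rec_vec_succ, prim_rec_vec_proj; lia.
Qed.

Lemma prim_rec_mul : prim_rec_binop Nat.mul.
Proof.
  eapply prim_rec_vec_ext;
    [| apply (prim_rec_binop_rec (fun _ => 0) (fun _ r p => r + p))].
  - intro v; simpl; induction (v 0); simpl; lia.
  - apply prim_rec_vec_const.
  - apply (prim_rec_vec_comp2 3 Nat.add); [exact prim_rec_add | apply prim_rec_vec_proj; lia..].
Qed.

(* [fun y p => p - y]: the predecessor iterated [y] times on [p]. *)
Lemma prim_rec_sub_swapped : prim_rec_binop (fun y p => p - y).
Proof.
  assert (Hpred : prim_rec_binop (fun y _ => Nat.pred y)).
  { eapply prim_rec_vec_ext;
      [| apply (prim_rec_binop_rec (fun _ => 0) (fun y _ _ => y))].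
    - intro v; simpl; now destruct (v 0).
    - apply prim_rec_vec_const.
    - apply prim_rec_vec_proj; lia. }
  eapply prim_rec_vec_ext;
    [| apply (prim_rec_binop_rec (fun p => p) (fun _ r _ => Nat.pred r))].
  - intro v; simpl; induction (v 0); simpl; lia.
  - apply prim_rec_vec_proj; lia.
  - apply (prim_rec_vec_comp2 3 (fun y _ => Nat.pred y) (fun w => w 1) (fun w => w 1));
      [exact Hpred | apply prim_rec_vec_proj; lia..].
Qed.

Lemma prim_rec_sub : prim_rec_binop Nat.sub.
Proof.
  apply (prim_rec_vec_comp2 2 (fun y p => p - y));
    [exact prim_rec_sub_swapped | apply prim_rec_vec_proj; lia..].
Qed.

Lemma prim_rec_pow2 : prim_rec_binop (fun y _ => 2 ^ y).
Proof.
  eapply prim_rec_vec_ext;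
    [| apply (prim_rec_binop_rec (fun _ => 1) (fun _ r _ => r + r))].
  - intro v; simpl; induction (v 0); simpl; lia.
  - apply prim_rec_vec_const.
  - apply (prim_rec_vec_comp2 3 Nat.add); [exact prim_rec_add | apply prim_rec_vec_proj; lia..].
Qed.

(* The indicator of [y < p] is the sign of [p - y]. *)
Lemma prim_rec_ltb : prim_rec_binop (fun y p => Nat.b2n (y <? p)).
Proof.
  assert (Hsign : prim_rec_binop (fun y _ => Nat.b2n (0 <? y))).
  { eapply prim_rec_vec_ext;
      [| apply (prim_rec_binop_rec (fun _ => 0) (fun _ _ _ => 1))].
    - intro v; simpl; now destruct (v 0).
    - apply prim_rec_vec_const.
    - apply prim_rec_vec_const. }
  eapply prim_rec_vec_ext;
    [| apply (prim_rec_vec_comp2 2 (fun y _ => Nat.b2n (0 <? y)) (fun w => w 1 - w 0) (fun w => w 0));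
       [exact Hsign | | apply prim_rec_vec_proj; lia]].
  - intro v; simpl.
    destruct (Nat.ltb_spec (v 0) (v 1)), (Nat.ltb_spec 0 (v 1 - v 0)); simpl; lia.
  - apply (prim_rec_vec_comp2 2 Nat.sub); [exact prim_rec_sub | apply prim_rec_vec_proj; lia..].
Qed.

Inductive nexpr : Type :=
| NVar (i : nat)
| NConst (c : nat)
| NAdd (a b : nexpr)
| NMul (a b : nexpr)
| NSub (a b : nexpr)
| NPow2 (a : nexpr)
| NLt (a b : nexpr)
| NApp (F : nat -> nat) (a : nexpr).

Fixpoint neval (e : nexpr) (v : nat -> nat) : nat :=
  match e with
  | NVar i => v i
  | NConst c => c
  | NAdd a b => neval a v + neval b v
  | NMul a b => neval a v * neval b v
  | NSub a b => neval a v - neval b v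
  | NPow2 a => 2 ^ neval a v
  | NLt a b => Nat.b2n (neval a v <? neval b v)
  | NApp F a => F (neval a v)
  end.

Fixpoint nexpr_pr (n : nat) (e : nexpr) : Prop :=
  match e with
  | NVar i => i < n
  | NConst _ => True
  | NAdd a b | NMul a b | NSub a b | NLt a b => nexpr_pr n a /\ nexpr_pr n b
  | NPow2 a => nexpr_pr n a
  | NApp F a => prim_rec_nat F /\ nexpr_pr n a
  end.

Lemma prim_rec_neval (n : nat) (e : nexpr) : nexpr_pr n e -> prim_rec_vec n (neval e).
Proof.
  induction e; simpl; intro Hok.
  - now apply prim_rec_vec_proj.
  - apply prim_rec_vec_const.
  - apply (prim_rec_vec_comp2 n Nat.add); [exact prim_rec_add | tauto..].
  - apply (prim_rec_vec_comp2 n Nat.mul); [exact prim_rec_mul | tauto..].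
  - apply (prim_rec_vec_comp2 n Nat.sub); [exact prim_rec_sub | tauto..].
  - apply (prim_rec_vec_comp2 n (fun y _ => 2 ^ y) (neval e) (neval e));
      [exact prim_rec_pow2 | tauto..].
  - apply (prim_rec_vec_comp2 n (fun y p => Nat.b2n (y <? p)));
      [exact prim_rec_ltb | tauto..].
  - apply prim_rec_vec_comp1; tauto.
Qed.

Open Scope R_scope.

Lemma inv_pow2_small (eps : R) : 0 < eps -> exists e : nat, / 2 ^ e < eps.
Proof.
  intro Heps.
  destruct (pow_lt_1_zero (/ 2)) with (y := eps) as [N HN]; auto.
  { rewrite Rabs_right; lra. }
  exists N; specialize (HN N (le_n _)).
  rewrite Rabs_right in HN by (apply Rle_ge, pow_le; lra).
  now rewrite <- pow_inv.
Qed.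

Lemma limit_within (u : nat -> R) (l a c : R) (N : nat) :
  Un_cv u l -> (forall j, (N <= j)%nat -> Rabs (a - u j) < c) -> Rabs (a - l) <= c.
Proof.
  intros Hu Hb.
  destruct (Rle_or_lt (Rabs (a - l)) c) as [H|H]; auto.
  destruct (Hu (Rabs (a - l) - c)) as [N1 HN1]; [lra|].
  set (j := max N N1).
  specialize (HN1 j (Nat.le_max_r _ _)); specialize (Hb j (Nat.le_max_l _ _)).
  unfold R_dist in HN1.
  assert (Rabs (a - l) <= Rabs (a - u j) + Rabs (u j - l)).
  { replace (a - l) with ((a - u j) + (u j - l)) by ring; apply Rabs_triang. }
  lra.
Qed.

Lemma cauchy_modulus_limit (q : nat -> R) (C : nat -> nat) :
  (forall e i j, (C e <= i)%nat -> (C e <= j)%nat -> Rabs (q i - q j) < / 2 ^ e) ->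
  exists x, Un_cv q x /\ forall e i, (C e <= i)%nat -> Rabs (q i - x) <= / 2 ^ e.
Proof.
  intro HC.
  assert (Hcrit : Cauchy_crit q).
  { intros eps Heps; destruct (inv_pow2_small eps Heps) as [e He].
    exists (C e); intros i j Hi Hj; unfold R_dist.
    specialize (HC e i j Hi Hj); lra. }
  destruct (R_complete q Hcrit) as [x Hx].
  exists x; split; [exact Hx|].
  intros e i Hi; apply (limit_within q x (q i) _ (C e) Hx).
  intros j Hj; now apply HC.
Qed.

Lemma natural_shift (x : R) :
  exists K T0 : nat, 1 <= x + INR K /\ Rabs (x + INR K - INR T0) <= 1.
Proof.
  destruct (archimed x) as [Hup1 Hup2].
  set (z := up x) in *; clearbody z.
  exists (Z.abs_nat z + 2)%nat, (Z.abs_nat (z + Z.abs z + 2))%nat.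
  rewrite !INR_IZR_INZ, Nat2Z.inj_add, Nat2Z.inj_abs_nat, Nat2Z.inj_abs_nat.
  rewrite (Z.abs_eq (z + Z.abs z + 2)) by lia.
  assert (Hz : 0 <= IZR z + IZR (Z.abs z)).
  { rewrite <- plus_IZR; apply IZR_le; lia. }
  rewrite !plus_IZR; simpl (IZR (Z.of_nat 2)); split; [lra|].
  rewrite Rabs_left1; lra.
Qed.

(* The digit compares [T] with the rational [num/den] up to the tolerance 1/4:
   2 if [num/den > T + 1/4], 0 if [num/den < T - 1/4], 1 otherwise. *)
Definition digit (T num den : nat) : nat :=
  (1 + Nat.b2n ((4 * T + 1) * den <? 4 * num) - Nat.b2n (4 * num + den <? 4 * T * den))%nat.

Lemma digit_le_2 (T num den : nat) : (digit T num den <= 2)%nat.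
Proof.
  unfold digit; destruct (_ <? _), (_ <? _); simpl; lia.
Qed.

Lemma Rabs_le_iff (u c : R) : Rabs u <= c <-> - c <= u <= c.
Proof. split; intro H; [split_Rabs; lra | now apply Rabs_le]. Qed.

Lemma nat_lt_scaled (a b den : nat) (u v : R) :
  (0 < den)%nat -> INR a = u * INR den -> INR b = v * INR den ->
  ((a < b)%nat <-> u < v).
Proof.
  intros Hden Ha Hb.
  assert (Hd : 0 < INR den) by now apply lt_0_INR.
  split; intro H.
  - apply lt_INR in H; rewrite Ha, Hb in H; exact (Rmult_lt_reg_r _ _ _ Hd H).
  - apply INR_lt; rewrite Ha, Hb; now apply Rmult_lt_compat_r.
Qed.

Lemma digit_step (T num den : nat) (Y : R) :
  (0 < den)%nat -> Rabs (INR num / INR den - Y) <= / 8 -> Rabs (Y - INR T) <= 1 ->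
  (1 <= 2 * T + digit T num den)%nat /\
  Rabs (2 * Y - INR (2 * T + digit T num den - 1)) <= 1.
Proof.
  intros Hden Happ HT.
  assert (Hd : 0 < INR den) by now apply lt_0_INR.
  set (z := INR num / INR den) in *.
  assert (Hz : 0 <= z) by (unfold z; apply Rmult_le_pos;
    [apply pos_INR | apply Rlt_le, Rinv_0_lt_compat, Hd]).
  assert (Tnn : 0 <= INR T) by apply pos_INR.
  assert (Hnum : INR (4 * num) = 4 * z * INR den)
    by (rewrite mult_INR; unfold z; simpl; field; lra).
  assert (Hup : ((4 * T + 1) * den < 4 * num)%nat <-> 4 * INR T + 1 < 4 * z).
  { apply (nat_lt_scaled _ _ den); [exact Hden | | exact Hnum].
    rewrite mult_INR, plus_INR, mult_INR; simpl; ring. }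
  assert (Hdown : (4 * num + den < 4 * T * den)%nat <-> 4 * z + 1 < 4 * INR T).
  { apply (nat_lt_scaled _ _ den); [exact Hden | rewrite plus_INR, Hnum; ring |].
    rewrite !mult_INR; simpl; ring. }
  apply Rabs_le_iff in Happ, HT.
  unfold digit.
  destruct (Nat.ltb_spec ((4 * T + 1) * den) (4 * num)) as [h1|h1];
  destruct (Nat.ltb_spec (4 * num + den) (4 * T * den)) as [h2|h2]; simpl Nat.b2n.
  - apply Hup in h1; apply Hdown in h2; lra.
  - apply Hup in h1; split; [lia|].
    replace (2 * T + (1 + 1 - 0) - 1)%nat with (2 * T + 1)%nat by lia.
    apply Rabs_le_iff; rewrite plus_INR, mult_INR; simpl; lra.
  - apply Hdown in h2.
    assert (T1 : (0 < T)%nat) by (apply INR_lt; simpl; lra).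
    split; [lia|].
    replace (2 * T + (1 + 0 - 1) - 1)%nat with (2 * T - 1)%nat by lia.
    apply Rabs_le_iff; rewrite minus_INR, mult_INR by lia; simpl; lra.
  - assert (~ 4 * INR T + 1 < 4 * z) by (rewrite <- Hup; lia).
    assert (~ 4 * z + 1 < 4 * INR T) by (rewrite <- Hdown; lia).
    split; [lia|].
    replace (2 * T + (1 + 0 - 0) - 1)%nat with (2 * T)%nat by lia.
    apply Rabs_le_iff; rewrite mult_INR; simpl; lra.
Qed.

Lemma dyadic_telescope (t : nat -> R) (n : nat) :
  t 0%nat + sum_f_R0 (fun k => (t (S k) - 2 * t k) / 2 ^ S k) n = t (S n) / 2 ^ S n.
Proof.
  induction n as [|n IHn].
  - simpl; field.
  - rewrite tech5, <- Rplus_assoc, IHn.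
    assert (0 < 2 ^ S n) by (apply pow_lt; lra).
    replace (2 ^ S (S n)) with (2 * 2 ^ S n) by (simpl; ring).
    field; lra.
Qed.

Lemma dyadic_error (y t : R) (n : nat) :
  Rabs (y * 2 ^ n - t) <= 1 -> Rabs (t / 2 ^ n - y) <= / 2 ^ n.
Proof.
  intro H.
  assert (Hp : 0 < 2 ^ n) by (apply pow_lt; lra).
  replace (t / 2 ^ n - y) with ((y * 2 ^ n - t) * - / 2 ^ n) by (field; lra).
  rewrite Rabs_mult, Rabs_Ropp, (Rabs_right (/ 2 ^ n)) by (apply Rle_ge, Rlt_le, Rinv_0_lt_compat, Hp).
  rewrite <- (Rmult_1_l (/ 2 ^ n)) at 2.
  apply Rmult_le_compat_r; [apply Rlt_le, Rinv_0_lt_compat, Hp | exact H].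
Qed.

Lemma cv_dyadic_rate (u : nat -> R) (l : R) :
  (forall n, Rabs (u n - l) <= / 2 ^ n) -> Un_cv u l.
Proof.
  intros Hu eps Heps.
  destruct (inv_pow2_small eps Heps) as [e He]; exists e; intros n Hn.
  unfold R_dist; apply Rle_lt_trans with (/ 2 ^ n); [apply Hu|].
  apply Rle_lt_trans with (/ 2 ^ e); [|exact He].
  apply Rinv_le_contravar; [apply pow_lt; lra | apply Rle_pow; [lra | exact Hn]].
Qed.

Section SignedDigits.

Variables (A : nat -> Z) (B C : nat -> nat) (K T0 : nat).

Definition sign_bit (m : nat) : nat := if (A m <? 0)%Z then 1%nat else 0%nat.

(* The numerator [A m + K B m] of [q_m + K], as a natural number. *)
Definition shifted_num (m : nat) : nat :=
  (Z.abs_nat (A m) + K * B m - 2 * sign_bit m * Z.abs_nat (A m))%nat.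

(* When [A m + K B m >= 0], the truncated subtractions are exact. *)
Lemma shifted_num_spec (m : nat) :
  (0 <= A m + Z.of_nat K * Z.of_nat (B m))%Z ->
  Z.of_nat (shifted_num m) = (A m + Z.of_nat K * Z.of_nat (B m))%Z.
Proof.
  intro H; unfold shifted_num, sign_bit; destruct (Z.ltb_spec (A m) 0); lia.
Qed.

Definition next_digit (n T : nat) : nat :=
  digit T (2 ^ n * shifted_num (C (n + 3))) (B (C (n + 3))).

(* The scaled approximations [T_n] of [(x + K) 2^n]. *)
Definition scaled_approx (n : nat) : nat :=
  nat_rect (fun _ => nat) T0 (fun y r => 2 * r + next_digit y r - 1)%nat n.

Definition digit_seq (n : nat) : nat := next_digit n (scaled_approx n).

Definition signed_digit (i : nat) : Z := (Z.of_nat (digit_seq (i - 1)) - 1)%Z.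

Lemma signed_digit_range (i : nat) :
  signed_digit i = (-1)%Z \/ signed_digit i = 0%Z \/ signed_digit i = 1%Z.
Proof.
  assert (Hd : (digit_seq (i - 1) <= 2)%nat) by apply digit_le_2.
  unfold signed_digit; lia.
Qed.

Hypotheses (hA : prim_rec_Z A) (hB : prim_rec_nat B) (hC : prim_rec_nat C).

Definition next_digit_nexpr (en eT : nexpr) : nexpr :=
  let m := NApp C (NAdd en (NConst 3)) in
  let absA := NApp (fun m => Z.abs_nat (A m)) m in
  let num := NMul (NPow2 en)
               (NSub (NAdd absA (NMul (NConst K) (NApp B m)))
                     (NMul (NMul (NConst 2) (NApp sign_bit m)) absA)) in
  let den := NApp B m in
  NSub (NAdd (NConst 1) (NLt (NMul (NAdd (NMul (NConst 4) eT) (NConst 1)) den)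
                             (NMul (NConst 4) num)))
       (NLt (NAdd (NMul (NConst 4) num) den) (NMul (NMul (NConst 4) eT) den)).

Lemma nexpr_pr_next_digit (n : nat) (en eT : nexpr) :
  nexpr_pr n en -> nexpr_pr n eT -> nexpr_pr n (next_digit_nexpr en eT).
Proof.
  destruct hA as [habsA hsign]; intros Hn HT; simpl; repeat split; assumption.
Qed.

Lemma prim_rec_scaled_approx : prim_rec_nat scaled_approx.
Proof.
  apply prim_rec_nat_iter.
  set (step := NSub (NAdd (NMul (NConst 2) (NVar 1)) (next_digit_nexpr (NVar 0) (NVar 1)))
                    (NConst 1)).
  apply (prim_rec_vec_ext 2 (neval step)); [reflexivity|].
  apply prim_rec_neval; cbn [nexpr_pr].
  split; [split; [split; [exact I | cbn; lia] | apply nexpr_pr_next_digit; cbn; lia] | exact I].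
Qed.

Lemma prim_rec_digit_seq : prim_rec_nat digit_seq.
Proof.
  apply prim_rec_nat_of_vec.
  apply (prim_rec_vec_ext 1 (neval (next_digit_nexpr (NVar 0) (NApp scaled_approx (NVar 0)))));
    [reflexivity|].
  apply prim_rec_neval, nexpr_pr_next_digit; cbn; [lia | split];
    [exact prim_rec_scaled_approx | lia].
Qed.

(* Since [d <= 2], [|d - 1| = (d - 1) + (1 - d)] and the sign bit is [1 - d]
   in truncated arithmetic. *)
Lemma prim_rec_signed_digit : prim_rec_Z signed_digit.
Proof.
  set (d := NApp digit_seq (NSub (NVar 0) (NConst 1))).
  assert (Hd : nexpr_pr 1 d) by (simpl; split; [exact prim_rec_digit_seq | lia]).
  assert (Hle : forall i, (digit_seq (i - 1) <= 2)%nat) by (intro; apply digit_le_2).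
  split; apply prim_rec_nat_of_vec.
  - apply (prim_rec_vec_ext 1 (neval (NAdd (NSub d (NConst 1)) (NSub (NConst 1) d)))).
    + intro v; unfold d; cbn [neval]; unfold signed_digit; specialize (Hle (v 0%nat)); lia.
    + apply prim_rec_neval; simpl; tauto.
  - apply (prim_rec_vec_ext 1 (neval (NSub (NConst 1) d))).
    + intro v; unfold d; cbn [neval]; unfold signed_digit; specialize (Hle (v 0%nat)).
      destruct (Z.ltb_spec (Z.of_nat (digit_seq (v 0%nat - 1)) - 1) 0); lia.
    + apply prim_rec_neval; simpl; tauto.
Qed.

Variable x : R.
Hypotheses (hBpos : forall n, (0 < B n)%nat)
  (happrox : forall e i, (C e <= i)%nat -> Rabs (IZR (A i) / INR (B i) - x) <= / 2 ^ e)
  (hK : 1 <= x + INR K) (hT0 : Rabs (x + INR K - INR T0) <= 1).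

Lemma approx_close (n : nat) :
  Rabs (INR (2 ^ n * shifted_num (C (n + 3))) / INR (B (C (n + 3)))
        - (x + INR K) * 2 ^ n) <= / 8.
Proof.
  set (m := C (n + 3)).
  assert (Hb : 0 < INR (B m)) by now apply lt_0_INR.
  set (q := IZR (A m) / INR (B m)).
  assert (Hp : 0 < 2 ^ n) by (apply pow_lt; lra).
  assert (Hq : Rabs (q - x) <= / 2 ^ n * / 8).
  { replace (/ 2 ^ n * / 8) with (/ 2 ^ (n + 3)) by (rewrite pow_add; simpl; field; lra).
    exact (happrox (n + 3) m (le_n _)). }
  assert (Hq8 : Rabs (q - x) <= / 8).
  { apply Rle_trans with (/ 2 ^ n * / 8); [exact Hq|].
    rewrite <- (Rmult_1_l (/ 8)) at 2; apply Rmult_le_compat_r; [lra|].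
    rewrite <- Rinv_1; apply Rinv_le_contravar; [lra | apply pow_R1_Rle; lra]. }
  assert (Hpos : (0 <= A m + Z.of_nat K * Z.of_nat (B m))%Z).
  { apply le_IZR; rewrite plus_IZR, mult_IZR, <- !INR_IZR_INZ.
    replace (IZR (A m)) with (q * INR (B m)) by (unfold q; field; lra).
    apply Rabs_le_iff in Hq8; nra. }
  assert (Hs : INR (shifted_num m) = IZR (A m) + INR K * INR (B m)).
  { rewrite INR_IZR_INZ, (shifted_num_spec m Hpos), plus_IZR, mult_IZR, <- !INR_IZR_INZ.
    reflexivity. }
  assert (Hnum : INR (2 ^ n * shifted_num m) / INR (B m) = (q + INR K) * 2 ^ n).
  { rewrite mult_INR, pow_INR, Hs; unfold q; replace (INR 2) with 2 by (simpl; ring).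
    field; lra. }
  rewrite Hnum.
  replace ((q + INR K) * 2 ^ n - (x + INR K) * 2 ^ n) with ((q - x) * 2 ^ n) by ring.
  rewrite Rabs_mult, (Rabs_right (2 ^ n)) by lra.
  replace (/ 8) with (/ 2 ^ n * / 8 * 2 ^ n) by (field; lra).
  apply Rmult_le_compat_r; lra.
Qed.

Lemma scaled_approx_step (n : nat) :
  Rabs ((x + INR K) * 2 ^ n - INR (scaled_approx n)) <= 1 ->
  (1 <= 2 * scaled_approx n + digit_seq n)%nat /\
  Rabs ((x + INR K) * 2 ^ S n - INR (scaled_approx (S n))) <= 1.
Proof.
  intro Hinv.
  replace ((x + INR K) * 2 ^ S n) with (2 * ((x + INR K) * 2 ^ n)) by (simpl; ring).
  apply digit_step; [apply hBpos | |exact Hinv].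
  exact (approx_close n).
Qed.

Lemma scaled_approx_close (n : nat) :
  Rabs ((x + INR K) * 2 ^ n - INR (scaled_approx n)) <= 1.
Proof.
  induction n as [|n IHn].
  - simpl; rewrite Rmult_1_r; exact hT0.
  - exact (proj2 (scaled_approx_step n IHn)).
Qed.

Lemma scaled_approx_succ (n : nat) :
  INR (scaled_approx (S n)) = 2 * INR (scaled_approx n) + INR (digit_seq n) - 1.
Proof.
  destruct (scaled_approx_step n (scaled_approx_close n)) as [H1 _].
  change (scaled_approx (S n)) with (2 * scaled_approx n + digit_seq n - 1)%nat.
  rewrite minus_INR by exact H1; rewrite plus_INR, mult_INR; simpl; ring.
Qed.

Lemma signed_partial_sum (n : nat) :
  IZR (Z.of_nat T0 - Z.of_nat K) + sum_f_R0 (fun k => IZR (signed_digit (S k)) / 2 ^ S k) n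
  = INR (scaled_approx (S n)) / 2 ^ S n - INR K.
Proof.
  set (t := fun k => INR (scaled_approx k)).
  rewrite (sum_eq _ (fun k => (t (S k) - 2 * t k) / 2 ^ S k)).
  - rewrite minus_IZR, <- !INR_IZR_INZ.
    change (INR T0) with (t 0%nat); change (INR (scaled_approx (S n))) with (t (S n)); rewrite <- (dyadic_telescope t n); ring.
  - intros k _; unfold signed_digit, t.
    replace (S k - 1)%nat with k by lia.
    rewrite minus_IZR, <- INR_IZR_INZ, scaled_approx_succ; unfold Rdiv; f_equal; ring.
Qed.

Lemma signed_expansion_cv :
  Un_cv (fun n => IZR (Z.of_nat T0 - Z.of_nat K)
                  + sum_f_R0 (fun k => IZR (signed_digit (S k)) / 2 ^ S k) n) x.
Proof.
  apply cv_dyadic_rate; intro n; rewrite signed_partial_sum.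
  replace (INR (scaled_approx (S n)) / 2 ^ S n - INR K - x)
    with (INR (scaled_approx (S n)) / 2 ^ S n - (x + INR K)) by ring.
  apply Rle_trans with (/ 2 ^ S n); [exact (dyadic_error _ _ _ (scaled_approx_close (S n)))|].
  apply Rinv_le_contravar; [apply pow_lt; lra | simpl; assert (0 < 2 ^ n) by (apply pow_lt; lra); lra].
Qed.

End SignedDigits.

Theorem theorem1 (A : nat -> Z) (B : nat -> nat) (C : nat -> nat)
  (hA : prim_rec_Z A) (hB : prim_rec_nat B) (hBpos : forall n, (0 < B n)%nat)
  (hC : prim_rec_nat C)
  (hCauchy : forall (e i j : nat), (C e <= i)%nat -> (C e <= j)%nat ->
     Rabs (IZR (A i) / INR (B i) - IZR (A j) / INR (B j)) < / 2 ^ e) :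
  exists (I : Z) (P : nat -> Z),
    prim_rec_Z P /\
    (forall i, P i = (-1)%Z \/ P i = 0%Z \/ P i = 1%Z) /\
    exists L : R,
      Un_cv (fun n => IZR I + sum_f_R0 (fun k => IZR (P (S k)) / 2 ^ (S k)) n) L /\
      Un_cv (fun n => IZR (A n) / INR (B n)) L.
Proof.
  destruct (cauchy_modulus_limit (fun n => IZR (A n) / INR (B n)) C hCauchy)
    as [x [Hx Hrate]].
  destruct (natural_shift x) as [K [T0 [HK HT0]]].
  exists (Z.of_nat T0 - Z.of_nat K)%Z, (signed_digit A B C K T0); split; [|split].
  - exact (prim_rec_signed_digit A B C K T0 hA hB hC).
  - apply signed_digit_range.
  - exists x; split; [|exact Hx].
    exact (signed_expansion_cv A B C K T0 x hBpos Hrate HK HT0).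
Qed.
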